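(* Let $r\geq 2$ be an integer and let $p$ be a real number with $0<p<r$. Then there exists $n_0=n_0(r,p)$ such that for every integer $n\geq n_0$, \[ \phi(r,p,n)=f\bigl(p,T_r(n)\bigr). \]
   Context: All graphs are finite and simple. For a real number $p>0$ and a graph $G$, set $f(p,G)=\sum_{u\in V(G)} d^p(u)$, where $d(u)$ is the degree of $u$ in $G$. For integers $r\geq 2$ and $n\geq 1$, $\phi(r,p,n)$ denotes the maximum of $f(p,G)$ over all $K_{r+1}$-free graphs $G$ of order $n$. $T_r(n)$ denotes the $r$-partite Turán graph of order $n$: the complete $r$-partite graph on $n$ vertices whose $r$ vertex classes have sizes differing pairwise by at most $1$. *)

From mathcomp Require Import all_boot.
From Stdlib Require Import Reals.
Set Implicit Arguments. Unset Strict Implicit. Unset Printing Implicit Defensive.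

Definition graph (n : nat) := {ffun 'I_n * 'I_n -> bool}.

Definition simple_graph n (G : graph n) : bool :=
  [forall u : 'I_n, forall v : 'I_n, (G (u, v) == G (v, u)) && ~~ G (u, u)].

Definition adj n (G : graph n) (u v : 'I_n) : bool := G (u, v).

Definition deg n (G : graph n) (u : 'I_n) : nat := #|[set v | adj G u v]|.

Definition has_clique n (k : nat) (G : graph n) : bool :=
  [exists S : {set 'I_n}, (#|S| == k) &&
     [forall u in S, forall v in S, (u != v) ==> adj G u v]].

Definition Kfree n (k : nat) (G : graph n) : bool := ~~ has_clique k G.

Definition npow (d : nat) (p : R) : R :=
  if d == 0 then 0%R else Rpower (INR d) p.

Definition fdeg n (p : R) (G : graph n) : R :=
  \big[Rplus/0%R]_(u : 'I_n) npow (deg G u) p.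

(* phi(r,p,n) = max of f(p,G) over K_{r+1}-free simple graphs of order n
   (nonempty family: the empty graph; all values are >= 0, so 0 as the
   neutral element of the max is harmless). *)
Definition phi (r : nat) (p : R) (n : nat) : R :=
  \big[Rmax/0%R]_(G : graph n | simple_graph G && Kfree r.+1 G) fdeg p G.

(* Turan graph T_r(n): vertex i in class (i mod r); classes have sizes
   differing by at most 1; complete r-partite. *)
Definition turan (r n : nat) : graph n :=
  [ffun uv : 'I_n * 'I_n => (uv.1 %% r)%N != (uv.2 %% r)%N].

(* By Erdős' degree-majorization theorem, every K_{r+1}-free graph G has a
   complete r-partite graph H on the same vertices with d_G(u) <= d_H(u) for
   all u, so f(p,G) <= f(p,H) = \sum_i s_i (n - s_i)^p where the s_i are the
   part sizes.  Moving one vertex from a part of size a to a part of size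
   b <= a - 2 does not decrease this sum once n is large: on [0, 2n/(p+1)] the
   function x (n - x)^p is concave, and beyond that point the larger part sits
   where the function decreases while, because p < r, the smaller part sits
   where it increases.  Such moves strictly decrease \sum_i s_i^2 and end at
   the balanced partition, i.e. at T_r(n). *)

From HB Require Import structures.
From mathcomp Require Import all_boot ssrAC zify.
From Stdlib Require Import Reals Lra.
From Coquelicot Require Import Coquelicot.

Set Implicit Arguments.
Unset Strict Implicit.
Unset Printing Implicit Defensive.
(* Coquelicot takes over the [%N] delimiter. *)
Delimit Scope nat_scope with N.

Section PartWeightR.
Local Open Scope R_scope.
Variables (N p : R).

Definition part_weightR x := x * exp (p * ln (N - x)).
Definition part_weightR' x := exp (p * ln (N - x)) / (N - x) * (N - (p + 1) * x).
Definition part_weightR'' x :=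
  p * exp (p * ln (N - x)) / (N - x) ^ 2 * ((p + 1) * x - 2 * N).

Lemma is_derive_part_weightR x : x < N -> is_derive part_weightR x (part_weightR' x).
Proof.
move=> xN; rewrite /part_weightR /part_weightR'.
by auto_derive; [lra | rewrite /Rminus; field; lra].
Qed.

Lemma is_derive_part_weightR' x : x < N -> is_derive part_weightR' x (part_weightR'' x).
Proof.
move=> xN; rewrite /part_weightR' /part_weightR''.
by auto_derive; [repeat split; lra | rewrite /Rminus; field; lra].
Qed.

Lemma part_weightR'_ge0 x : x < N -> (p + 1) * x <= N -> 0 <= part_weightR' x.
Proof.
move=> xN H; apply: Rmult_le_pos; last lra.
by apply/Rlt_le/Rdiv_lt_0_compat; [apply: exp_pos | lra].
Qed.

Lemma part_weightR'_le0 x : x < N -> N <= (p + 1) * x -> part_weightR' x <= 0.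
Proof.
move=> xN H; have : 0 < exp (p * ln (N - x)) / (N - x).
  by apply: Rdiv_lt_0_compat; [apply: exp_pos | lra].
rewrite /part_weightR'; nra.
Qed.

Lemma part_weightR''_le0 x : 0 < p -> x < N -> (p + 1) * x <= 2 * N -> part_weightR'' x <= 0.
Proof.
move=> p0 xN H; have : 0 < p * exp (p * ln (N - x)) / (N - x) ^ 2.
  apply: Rdiv_lt_0_compat; last by apply: pow_lt; lra.
  by apply: Rmult_lt_0_compat => //; apply: exp_pos.
rewrite /part_weightR''; nra.
Qed.

End PartWeightR.

Lemma mean_value f df a b : (a <= b)%R ->
  (forall x, a <= x <= b -> is_derive f x (df x))%R ->
  exists c, (a <= c <= b /\ f b - f a = df c * (b - a))%R.
Proof.
move=> ab fdf; have := MVT_gen f a b df; rewrite /= Rmin_left ?Rmax_right //; apply.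
- by move=> x Hx; apply: fdf; lra.
- move=> x Hx; apply/continuity_pt_filterlim/(ex_derive_continuous (V := R_NormedModule)).
  by exists (df x); apply: fdf.
Qed.

Lemma part_weightR_exchange N p r a b : (0 < p)%R -> (1 < r)%R -> (p < r)%R ->
  (p + 1 <= N)%R -> ((p + 1) * (r - 1) <= N * (r - p))%R ->
  (0 <= b)%R -> (b + 2 <= a)%R -> (a < N)%R -> ((r - 1) * b + a <= N)%R ->
  (part_weightR N p a - part_weightR N p (a - 1) <=
   part_weightR N p (b + 1) - part_weightR N p b)%R.
Proof.
move=> p0 r1 pr Np1 Nlarge b0 ba aN sumN.
have [xi [xiE ->]] := @mean_value (part_weightR N p) (part_weightR' N p) b (b + 1)
  ltac:(lra) ltac:(move=> x Hx; apply: is_derive_part_weightR; lra).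
have [eta [etaE ->]] := @mean_value (part_weightR N p) (part_weightR' N p) (a - 1) a
  ltac:(lra) ltac:(move=> x Hx; apply: is_derive_part_weightR; lra).
have [concave|convex] := Rle_or_lt ((p + 1) * a) (2 * N).
- have [z [zE dz]] := @mean_value (part_weightR' N p) (part_weightR'' N p) xi eta
    ltac:(lra) ltac:(move=> x Hx; apply: is_derive_part_weightR'; lra).
  have : (part_weightR'' N p z <= 0)%R by apply: part_weightR''_le0 => //; [lra | nra].
  nra.
- (* Here [a - 1] lies where the function decreases and, since p < r, [b + 1]
     where it increases. *)
  have small_b : ((p + 1) * (b + 1) <= N)%R.
    apply: (Rmult_le_reg_l (r - 1)); first lra.
    have : ((p + 1) * (r - 1) * b < (p - 1) * N)%R by nra.
    nra.
  have : (0 <= part_weightR' N p xi)%R by apply: part_weightR'_ge0; nra.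
  have : (part_weightR' N p eta <= 0)%R by apply: part_weightR'_le0; nra.
  lra.
Qed.

HB.instance Definition _ := Monoid.isComLaw.Build R 0%R Rplus
  (fun x y z => esym (Rplus_assoc x y z)) Rplus_comm Rplus_0_l.

Local Open Scope nat_scope.

Lemma npow_ge0 d p : (0 <= npow d p)%R.
Proof. by rewrite /npow; case: eqP => _; [apply: Rle_refl | apply/Rlt_le/exp_pos]. Qed.

Lemma npow_homo p d d' : (0 < p)%R -> d <= d' -> (npow d p <= npow d' p)%R.
Proof.
move=> p0 dd'; rewrite /npow; case: eqP => [_|/eqP d0]; first exact: npow_ge0.
rewrite ifF; last by apply/eqP; lia.
by apply: Rle_Rpower_l; [lra | split; [apply/lt_0_INR/ltP; lia | apply/le_INR/leP]].
Qed.

Lemma INR_subn a b : b <= a -> INR (a - b) = (INR a - INR b)%R.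
Proof. by move=> ba; rewrite -minusE minus_INR //; apply/leP. Qed.

(* The contribution to [fdeg p] of a part of size [s] of a complete multipartite
   graph of order [n]. *)
Definition part_weight (p : R) (n s : nat) : R := (INR s * npow (n - s) p)%R.

Lemma part_weight_ge0 p n s : (0 <= part_weight p n s)%R.
Proof. by apply: Rmult_le_pos; [apply: pos_INR | apply: npow_ge0]. Qed.

Lemma part_weight_part_weightR p n s :
  s < n -> part_weight p n s = part_weightR (INR n) p (INR s).
Proof.
by move=> sn; rewrite /part_weight /part_weightR /npow ifF -?INR_subn //; apply/eqP; lia.
Qed.

Lemma part_weight_exchange p r n a b : (0 < p)%R -> 1 < r -> (p < INR r)%R ->
  (p + 1 <= INR n)%R -> ((p + 1) * (INR r - 1) <= INR n * (INR r - p))%R ->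
  b.+2 <= a -> a <= n -> (r - 1) * b + a <= n ->
  (part_weight p n a + part_weight p n b <= part_weight p n a.-1 + part_weight p n b.+1)%R.
Proof.
move=> p0 r1 pr Np1 Nlarge ba an sumn.
have [aN|na] := ltnP a n; last first.
  have /eqP : (r - 1) * b = 0 by move: sumn; set k := (r - 1) * b; lia.
  rewrite muln_eq0 subn_eq0 leqNgt r1 /= => /eqP ->.
  have -> : a = n by lia.
  have := part_weight_ge0 p n n.-1; have := part_weight_ge0 p n 1.
  by rewrite /part_weight subnn (_ : npow 0 p = 0%R) //=; lra.
have r1R : (1 < INR r)%R by apply/(lt_INR 1)/ltP.
have := @part_weightR_exchange (INR n) p (INR r) (INR a) (INR b)
  p0 r1R pr Np1 Nlarge (pos_INR b).
rewrite !part_weight_part_weightR; try lia.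
rewrite -subn1 !INR_subn ?S_INR //= ?Rplus_0_l; last lia.
move=> exch; suff: (part_weightR (INR n) p (INR a) - part_weightR (INR n) p (INR a - 1) <=
    part_weightR (INR n) p (INR b + 1) - part_weightR (INR n) p (INR b))%R by lra.
apply: exch.
- by rewrite (_ : 2%R = INR 2) // -plus_INR; apply/le_INR/leP; lia.
- exact/lt_INR/ltP.
- by rewrite (_ : 1%R = INR 1) // -INR_subn 1?ltnW // -mult_INR -plus_INR; apply/le_INR/leP.
Qed.

Lemma INR_sum (I : finType) (P : pred I) (F : I -> nat) :
  INR (\sum_(i | P i) F i) = \big[Rplus/0%R]_(i | P i) INR (F i).
Proof. by apply: (big_morph INR) => // x y; apply: plus_INR. Qed.

Lemma Rsum_const (I : finType) (P : pred I) (C : R) :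
  \big[Rplus/0%R]_(i | P i) C = (INR #|P| * C)%R.
Proof. by rewrite -sum1_card INR_sum; elim/big_rec2: _ => [|i x y _ ->] /=; ring. Qed.

Lemma Rsum_le (I : finType) (P : pred I) (F G : I -> R) :
  (forall i, P i -> F i <= G i)%R ->
  (\big[Rplus/0%R]_(i | P i) F i <= \big[Rplus/0%R]_(i | P i) G i)%R.
Proof.
move=> FG; apply: (big_ind2 (fun x y => x <= y)%R) => //; first exact: Rle_refl.
by move=> *; apply: Rplus_le_compat.
Qed.

Lemma Rsum_ge0 (I : finType) (P : pred I) (F : I -> R) :
  (forall i, P i -> 0 <= F i)%R -> (0 <= \big[Rplus/0%R]_(i | P i) F i)%R.
Proof.
move=> F0; apply: (big_ind (fun x => 0 <= x)%R) => //; first exact: Rle_refl.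
by move=> *; apply: Rplus_le_le_0_compat.
Qed.

Lemma Rbigmax_ge (I : eqType) (s : seq I) (P : pred I) (F : I -> R) x :
  x \in s -> P x -> (F x <= \big[Rmax/0%R]_(i <- s | P i) F i)%R.
Proof.
elim: s => [//|y s IH]; rewrite inE big_cons => /orP [/eqP <- -> | xs Px].
  exact: Rmax_l.
by case: (P y); [apply: Rle_trans (Rmax_r _ _) | ]; apply: IH.
Qed.

Section Transfer.
Variables (k : nat) (s : 'I_k -> nat) (i j : 'I_k).
Hypothesis ij : i != j.

Definition transfer (l : 'I_k) : nat :=
  if l == i then (s i).-1 else if l == j then (s j).+1 else s l.

Lemma big_transfer (T : Type) (idx : T) (op : Monoid.com_law idx) (F : nat -> T) :
  op (\big[op/idx]_l F (transfer l)) (op (F (s i)) (F (s j))) =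
  op (\big[op/idx]_l F (s l)) (op (F (s i).-1) (F (s j).+1)).
Proof.
have ji : j != i by rewrite eq_sym.
rewrite [in LHS](bigD1 i) // [in RHS](bigD1 i) //=.
rewrite [in LHS](bigD1 j) // [in RHS](bigD1 j) //=.
rewrite {1}/transfer eqxx {1}/transfer (negPf ji) eqxx.
rewrite (eq_bigr (F \o s)) => [|l /andP [li lj]]; last first.
  by rewrite /transfer (negPf li) (negPf lj).
by rewrite (AC ((1*2)*2) ((4*(5*3))*(1*2))).
Qed.

Lemma sum_transfer : 0 < s i -> \sum_l transfer l = \sum_l s l.
Proof. by have := @big_transfer _ _ addn (fun x => x); rewrite /=; lia. Qed.

Lemma sum_sq_transfer : (s j).+2 <= s i -> \sum_l transfer l ^ 2 < \sum_l s l ^ 2.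
Proof. by have := @big_transfer _ _ addn (fun x => x ^ 2); rewrite /=; nia. Qed.

End Transfer.

Definition balanced_value (p : R) (r n : nat) : R :=
  (INR (n %% r) * part_weight p n (n %/ r).+1 + INR (r - n %% r) * part_weight p n (n %/ r))%R.

Lemma balanced_weights p m n (s : 'I_m.+1 -> nat) :
  \sum_i s i = n -> (forall i j, s i <= s j + 1) ->
  \big[Rplus/0%R]_i part_weight p n (s i) = balanced_value p m.+1 n.
Proof.
move=> sum_n bal; have [i0 _ min_i0] := arg_minnP s (P := xpredT) (i0 := ord0) isT.
set q := s i0 in min_i0; set A := [set i | s i == q.+1].
have sE i : s i = q + (i \in A).
  by rewrite inE; have := min_i0 i isT; have := bal i i0; case: eqP; lia.
have nE : n = q * m.+1 + #|A|.
  rewrite -sum_n (eq_bigr _ (fun i _ => sE i)) big_split /= sum_nat_const card_ord mulnC.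
  by rewrite -sum1_card [in RHS]big_mkcond.
have A_lt : #|A| < m.+1.
  rewrite -[X in _ < X]card_ord -cardsT; apply/proper_card/properP.
  by split; [exact: subsetT | exists i0; rewrite ?inE //; apply/eqP; lia].
rewrite /balanced_value; have [-> ->] : n %/ m.+1 = q /\ n %% m.+1 = #|A|.
  by rewrite nE divnMDl // modnMDl divn_small // modn_small // addn0.
rewrite (bigID (fun i => i \in A)) /= (eq_bigr (fun=> part_weight p n q.+1)); last first.
  by move=> i iA; rewrite sE iA addn1.
rewrite [X in (_ + X)%R](eq_bigr (fun=> part_weight p n q)); last first.
  by move=> i /negPf iA; rewrite sE iA addn0.
have cardAC : m.+1 - #|A| = #|~: A| by have := cardsC A; rewrite card_ord; lia.
by rewrite !Rsum_const cardAC; congr (_ + INR _ * _)%R; apply: eq_card => i; rewrite inE.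
Qed.

Lemma card_residue_class n r i : 0 < r -> i < r ->
  #|[set u : 'I_n | u %% r == i]| = n %/ r + (i < n %% r).
Proof.
move=> r_gt0 i_lt_r.
have -> : #|[set u : 'I_n | u %% r == i]| = \sum_(0 <= u < n) (u %% r == i).
  by rewrite big_mkord -sum1_card big_mkcond; apply: eq_bigr => u _; rewrite inE; case: eqP.
elim: n => [|n IH]; first by rewrite big_nil div0n mod0n.
rewrite big_nat_recr //= IH modnS divnS //; have := ltn_pmod n r_gt0.
case: ifP => [r_dvd|_] t_lt_r; last by case: (ltngtP i (n %% r)); lia.
have : r <= (n %% r).+1.
  apply: dvdn_leq => //; move: r_dvd.
  by rewrite {1}(divn_eq n r) -addnS dvdn_addr // dvdn_mull.
by case: (ltngtP i (n %% r)); lia.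
Qed.

Section Colourings.
Variables (n k : nat) (c : 'I_n -> 'I_k).

Lemma sum_card_colour_classes : \sum_i #|[set u | c u == i]| = n.
Proof.
rewrite -[RHS]card_ord -sum1_card (partition_big c xpredT) //=.
by apply: eq_bigr => i _; rewrite -sum1_card; apply: eq_bigl => u; rewrite inE.
Qed.

Lemma sum_npow_colours p :
  \big[Rplus/0%R]_u npow #|[set v | c v != c u]| p =
  \big[Rplus/0%R]_i part_weight p n #|[set u | c u == i]|.
Proof.
rewrite (partition_big c xpredT) //=; apply: eq_bigr => i _.
rewrite (eq_bigr (fun=> npow (n - #|[set u | c u == i]|) p)) => [|u /eqP <-].
  by rewrite Rsum_const /part_weight; congr (INR _ * _)%R; apply: eq_card => u; rewrite inE.
have -> : [set v | c v != c u] = ~: [set v | c v == c u] by apply/setP => v; rewrite !inE.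
set A := [set v | c v == c u]; congr npow.
by have := cardsC A; rewrite card_ord => cardA; rewrite -[X in X - _]cardA addKn.
Qed.

End Colourings.

Lemma turan_adj r n u v : adj (turan r n) u v = (u %% r != v %% r).
Proof. by rewrite /adj /turan ffunE. Qed.

Lemma turan_simple r n : simple_graph (turan r n).
Proof.
apply/forallP => u; apply/forallP => v.
by rewrite !ffunE /= eqxx andbT (eq_sym (v %% r)).
Qed.

Lemma turan_Kfree r n : 0 < r -> Kfree r.+1 (turan r n).
Proof.
move=> r_gt0; apply/negP => /existsP [S /andP [/eqP cardS /forallP clS]].
pose res (u : 'I_n) : 'I_r := Ordinal (ltn_pmod u r_gt0).
have res_inj : {in S &, injective res}.
  move=> u v uS vS /(congr1 val) /= resE; apply/eqP; apply: contraTT isT => uv.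
  by have := clS u; rewrite uS => /forallP /(_ v); rewrite vS uv turan_adj resE eqxx.
by have := max_card (res @: S); rewrite card_in_imset // cardS card_ord ltnn.
Qed.

Lemma fdeg_turan p m n : fdeg p (turan m.+1 n) = balanced_value p m.+1 n.
Proof.
pose res (u : 'I_n) : 'I_m.+1 := Ordinal (ltn_pmod u (ltn0Sn m)).
have classE i : #|[set u | res u == i]| = n %/ m.+1 + (i < n %% m.+1).
  by rewrite -card_residue_class //; apply: eq_card => u; rewrite !inE.
rewrite /fdeg (eq_bigr (fun u => npow #|[set v | res v != res u]| p)) => [|u _].
  rewrite sum_npow_colours (balanced_weights p (sum_card_colour_classes res)) // => i j.
  by rewrite !classE; lia.
by rewrite /deg; congr npow; apply: eq_card => v; rewrite !inE turan_adj eq_sym.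
Qed.

Definition is_clique n (G : graph n) (T : {set 'I_n}) : bool :=
  [forall u in T, forall v in T, (u != v) ==> adj G u v].

Lemma card_sep_split n (S N : {set 'I_n}) (P : pred 'I_n) : N \subset S ->
  #|[set w in S | P w]| = #|[set w in N | P w]| + #|[set w in S :\: N | P w]|.
Proof.
move=> NS; rewrite -(cardsID N [set w in S | P w]); congr (_ + _); apply: eq_card => w.
all: by rewrite !inE; case wN: (w \in N); rewrite ?(subsetP NS w wN) /= ?andbT ?andbF.
Qed.

Section DegreeMajorization.
Variables (n : nat) (G : graph n).
Hypothesis G_simple : simple_graph G.

Lemma adj_sym u v : adj G u v = adj G v u.
Proof. by move/forallP/(_ u)/forallP/(_ v)/andP: G_simple => [/eqP]. Qed.

Lemma adj_irr u : adj G u u = false.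
Proof. by move/forallP/(_ u)/forallP/(_ u)/andP: G_simple => [_ /negPf]. Qed.

Lemma nbhd_clique_free k (S : {set 'I_n}) (v : 'I_n) : v \in S ->
  (forall T : {set 'I_n}, T \subset S -> #|T| = k.+2 -> ~~ is_clique G T) ->
  forall T : {set 'I_n}, T \subset [set w in S | adj G v w] -> #|T| = k.+1 ->
  ~~ is_clique G T.
Proof.
move=> vS S_free T /subsetP TN cardT; apply/negP => clT.
have vT : v \notin T by apply/negP => /TN; rewrite inE adj_irr andbF.
apply: (negP (S_free (v |: T) _ _)).
- by apply/subsetP => x; rewrite !inE => /orP [/eqP -> | /TN]; rewrite ?inE => // /andP[].
- by rewrite cardsU1 vT cardT.
apply/forallP => x; apply/implyP; rewrite inE => Tx.
apply/forallP => y; apply/implyP; rewrite inE => Ty; apply/implyP => xy.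
have vN w : w \in T -> adj G v w by move/TN; rewrite inE => /andP[].
case/orP: Tx => [/set1P ? | xT]; case/orP: Ty => [/set1P ? | yT]; subst.
- by rewrite eqxx in xy.
- exact: vN.
- by rewrite adj_sym vN.
- by move/forallP/(_ x)/implyP/(_ xT)/forallP/(_ y)/implyP/(_ yT)/implyP/(_ xy): clT.
Qed.

(* Erdős: colour the neighbourhood of a vertex of maximum degree inductively and
   give a new colour to the rest. *)
Lemma degree_majorization k (S : {set 'I_n}) :
  (forall T : {set 'I_n}, T \subset S -> #|T| = k.+1 -> ~~ is_clique G T) ->
  exists c : 'I_n -> nat, (forall u, u \in S -> c u < k) /\
    (forall u, u \in S -> #|[set w in S | adj G u w]| <= #|[set w in S | c w != c u]|).
Proof.
elim: k S => [|k IH] S S_free.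
  have S0 : S = set0.
    apply/setP => u; rewrite inE; apply/negP => uS.
    apply: (negP (S_free [set u] _ _)); [by rewrite sub1set | by rewrite cards1 |].
    apply/forallP => x; apply/implyP => /set1P ->.
    by apply/forallP => y; apply/implyP => /set1P ->; rewrite eqxx.
  by exists (fun=> 0); split => u; rewrite S0 inE.
have [S0|[v0 v0S]] := set_0Vmem S; first by exists (fun=> 0); split => u; rewrite S0 inE.
have [v vS max_v] := @arg_maxnP _ v0 (mem S) (fun v => #|[set w in S | adj G v w]|) v0S.
have [c [c_lt c_deg]] := IH _ (nbhd_clique_free vS S_free).
set N := [set w in S | adj G v w] in c_lt c_deg *.
have inN w : (w \in N) = (w \in S) && adj G v w by rewrite inE.
have NS : N \subset S by apply/subsetP => w; rewrite inN => /andP [].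
clearbody N.
exists (fun u => if u \in N then c u else k); split => [u uS|u uS].
  by case: ifP => // uN; apply: ltnW; apply: c_lt.
case: (boolP (u \in N)) => uN.
- rewrite (card_sep_split _ NS) (card_sep_split (fun w => _ != _) NS); apply: leq_add.
  + apply: leq_trans (c_deg u uN) _; apply/subset_leq_card/subsetP => w.
    by rewrite !inE => /andP [wN cwu]; rewrite wN.
  + apply/subset_leq_card/subsetP => w; rewrite !inE => /andP [/andP [/negPf wN wS] _].
    by rewrite wN wS /=; have := c_lt u uN; apply: contraTneq => <-; rewrite ltnn.
- apply: leq_trans (max_v u uS) _; apply/subset_leq_card/subsetP => w.
  rewrite !inE => /andP [wS vw]; have wN : w \in N by rewrite inN wS vw.
  by rewrite wS wN /=; have := c_lt w wN; apply: contraTneq => ->; rewrite ltnn.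
Qed.

End DegreeMajorization.

Lemma large_order_eventually p r : (p < r)%R -> exists n0, forall n, n0 <= n ->
  (p + 1 <= INR n)%R /\ ((p + 1) * (r - 1) <= INR n * (r - p))%R.
Proof.
move=> pr; pose Y := ((p + 1) * (r - 1) / (r - p))%R.
have YE : (Y * (r - p) = (p + 1) * (r - 1))%R by rewrite /Y; field; lra.
have [n0] := INR_archimed 1 (Rabs (p + 1) + Rabs Y) Rlt_0_1; rewrite Rmult_1_r => n0_large.
exists n0 => n /leP/le_INR n0n.
have := Rle_abs (p + 1); have := Rle_abs Y; have := Rabs_pos Y; have := Rabs_pos (p + 1).
by move=> *; split; [lra | rewrite -YE; apply: Rmult_le_compat_r; lra].
Qed.

Section LargeOrder.
Variables (p : R) (m n : nat).
Hypotheses (p_gt0 : (0 < p)%R) (p_lt_r : (p < INR m.+1)%R) (m_gt0 : 0 < m).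
Hypotheses (n_ge : (p + 1 <= INR n)%R)
  (n_large : ((p + 1) * (INR m.+1 - 1) <= INR n * (INR m.+1 - p))%R).

Lemma weights_le_transfer (s : 'I_m.+1 -> nat) i j :
  \sum_l s l = n -> (forall l, s j <= s l) -> (s j).+2 <= s i ->
  (\big[Rplus/0%R]_l part_weight p n (s l) <=
   \big[Rplus/0%R]_l part_weight p n (transfer s i j l))%R.
Proof.
move=> sum_n min_j ji; have ij : i != j by apply: contraTneq ji => ->; lia.
have other_parts : m * s j <= \sum_(l | l != i) s l.
  by rewrite (leq_trans _ (leq_sum _ (fun l _ => min_j l))) // sum_nat_const cardC1 card_ord.
have sum_i : n = s i + \sum_(l | l != i) s l by rewrite -sum_n (bigD1 i).
have exch : (part_weight p n (s i) + part_weight p n (s j) <=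
    part_weight p n (s i).-1 + part_weight p n (s j).+1)%R.
  apply: (part_weight_exchange (r := m.+1)) => //; first lia.
  by rewrite subn1 /=; lia.
have /= := big_transfer s ij Rplus (part_weight p n).
lra.
Qed.

Lemma weights_le_balanced (s : 'I_m.+1 -> nat) : \sum_l s l = n ->
  (\big[Rplus/0%R]_l part_weight p n (s l) <= balanced_value p m.+1 n)%R.
Proof.
have [K] := ubnP (\sum_l s l ^ 2); elim: K s => // K IH s sq_lt sum_n.
have [j _ min_j] := arg_minnP s (P := xpredT) (i0 := ord0) isT.
have [i _ max_i] := arg_maxnP s (P := xpredT) (i0 := ord0) isT.
have [bal|unbal] := leqP (s i) (s j).+1.
  rewrite (balanced_weights p sum_n) => [|l l']; first exact: Rle_refl.
  by have := max_i l isT; have := min_j l' isT; lia.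
have ij : i != j by apply: contraTneq unbal => ->; lia.
apply: Rle_trans (weights_le_transfer sum_n (fun l => min_j l isT) unbal) (IH _ _ _).
- exact: leq_trans (sum_sq_transfer ij unbal) sq_lt.
- by rewrite sum_transfer //; lia.
Qed.

Lemma fdeg_le_balanced (G : graph n) : simple_graph G -> Kfree m.+2 G ->
  (fdeg p G <= balanced_value p m.+1 n)%R.
Proof.
move=> G_simple G_free.
have [|c [c_lt c_deg]] := degree_majorization G_simple (k := m.+1) (S := setT).
  move=> T _ cardT; apply: contra G_free => clT.
  by apply/existsP; exists T; rewrite cardT eqxx.
pose col u : 'I_m.+1 := Ordinal (c_lt u (in_setT u)).
apply: (@Rle_trans _ (\big[Rplus/0%R]_u npow #|[set v | col v != col u]| p)).
  apply: Rsum_le => u _; apply: npow_homo => //; rewrite /deg.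
  by have := c_deg u (in_setT u); congr (_ <= _); apply: eq_card => v; rewrite !inE.
by rewrite sum_npow_colours; apply: weights_le_balanced (sum_card_colour_classes col).
Qed.

Lemma phi_turan : phi m.+1 p n = fdeg p (turan m.+1 n).
Proof.
apply: Rle_antisym.
  rewrite fdeg_turan; apply: (big_ind (fun x => x <= _)%R).
  - by rewrite -fdeg_turan; apply: Rsum_ge0 => u _; apply: npow_ge0.
  - by move=> x y; apply: Rmax_lub.
  by move=> G /andP [G_simple G_free]; apply: fdeg_le_balanced.
apply: Rbigmax_ge; first by rewrite mem_index_enum.
by rewrite turan_simple turan_Kfree.
Qed.

End LargeOrder.

Theorem theorem1 (r : nat) (p : R) :
  (2 <= r)%N -> (0 < p)%R -> (p < INR r)%R ->
  exists n0 : nat, forall n : nat, (n0 <= n)%N -> phi r p n = fdeg p (turan r n).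
Proof.
case: r => [//|m] m_gt0 p_gt0 p_lt_r.
have [n0 n0_large] := large_order_eventually p_lt_r.
by exists n0 => n /n0_large [n_ge n_large]; apply: phi_turan.
Qed.
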